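(* Let $d=2$. The convex envelope of $s\mapsto s_{1n}s_{2n}$ over $Q$ is $$\check b(s)=\max_{\pi\in\Pi}\Bigl\{a_{10}a_{2n}+\sum_{t:\pi_t=1}a_{2(n-p^t_2)}\bigl(s_{1p^t_1}-s_{1p^{t-1}_1}\bigr)+\sum_{t:\pi_t=2}a_{1p^t_1}\bigl(a_{2(n-p^t_2)}-a_{2(n-p^{t-1}_2)}-s_{2(n-p^t_2)}+s_{2(n-p^{t-1}_2)}\bigr)\Bigr\},$$ and the concave envelope of $s\mapsto s_{1n}s_{2n}$ over $Q$ is $$\hat b(s)=\min_{\pi\in\Pi}\Bigl\{a_{10}a_{20}+\sum_{t:\pi_t=1}a_{2p^t_2}\bigl(s_{1p^t_1}-s_{1p^{t-1}_1}\bigr)+\sum_{t:\pi_t=2}a_{1p^t_1}\bigl(s_{2p^t_2}-s_{2p^{t-1}_2}\bigr)\Bigr\}.$$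
   Context: Let $n$ be a positive integer and $a=(a_1,a_2)\in\mathbb{R}^{2\times(n+1)}$ with $a_{i0}<a_{i1}<\dots<a_{in}$, $i=1,2$. Let $v_{ij}\in\mathbb{R}^{n+1}$ have $k$-th component $a_{i,\min\{k,j\}}$ ($k=0,\dots,n$), $Q_i=\operatorname{conv}\{v_{i0},\dots,v_{in}\}$, $Q=Q_1\times Q_2$, points $s=(s_1,s_2)$, $s_i=(s_{i0},\dots,s_{in})$. $\Pi$ is the set of direction vectors $\pi=(\pi_1,\dots,\pi_{2n})\in\{1,2\}^{2n}$ with exactly $n$ entries equal to $1$ and $n$ equal to $2$; for $\pi\in\Pi$ set $p^0=(0,0)$ and $p^t=p^{t-1}+e_{\pi_t}$, $t\in[2n]$, where $e_1,e_2$ are unit vectors in $\mathbb{R}^2$. *)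

From HB Require Import structures.
From mathcomp Require Import all_boot all_order all_algebra.
From mathcomp Require Import reals.
Set Implicit Arguments. Unset Strict Implicit. Unset Printing Implicit Defensive.
Import Order.TTheory GRing.Theory Num.Theory.
Local Open Scope ring_scope.

Definition pt (R : Type) (n : nat) := (('I_n.+1 -> R) * ('I_n.+1 -> R))%type.

Definition vtx (R : Type) (n : nat) (ai : 'I_n.+1 -> R) (j : 'I_n.+1)
  : 'I_n.+1 -> R := fun k => ai (if (k <= j)%N then k else j).

Definition in_Qi (R : realType) (n : nat) (ai : 'I_n.+1 -> R)
  (x : 'I_n.+1 -> R) : Prop :=
  exists lam : 'I_n.+1 -> R,
    [/\ forall j, 0 <= lam j, \sum_j lam j = 1
      & forall k, x k = \sum_j lam j * vtx ai j k].

Definition inQ (R : realType) (n : nat) (a1 a2 : 'I_n.+1 -> R) (s : pt R n)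
  : Prop := in_Qi a1 s.1 /\ in_Qi a2 s.2.

Definition comb (R : realType) (n : nat) (t : R) (x y : pt R n) : pt R n :=
  (fun k => t * x.1 k + (1 - t) * y.1 k, fun k => t * x.2 k + (1 - t) * y.2 k).

Definition convex_on (R : realType) (n : nat) (D : pt R n -> Prop)
  (g : pt R n -> R) : Prop :=
  forall x y t, D x -> D y -> 0 <= t <= 1 ->
    g (comb t x y) <= t * g x + (1 - t) * g y.

Definition concave_on (R : realType) (n : nat) (D : pt R n -> Prop)
  (g : pt R n -> R) : Prop :=
  forall x y t, D x -> D y -> 0 <= t <= 1 ->
    t * g x + (1 - t) * g y <= g (comb t x y).

Definition is_convex_envelope (R : realType) (n : nat) (D : pt R n -> Prop)
  (f g : pt R n -> R) : Prop :=
  [/\ convex_on D g, (forall x, D x -> g x <= f x)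
    & forall h, convex_on D h -> (forall x, D x -> h x <= f x) ->
        forall x, D x -> h x <= g x].

Definition is_concave_envelope (R : realType) (n : nat) (D : pt R n -> Prop)
  (f g : pt R n -> R) : Prop :=
  [/\ concave_on D g, (forall x, D x -> f x <= g x)
    & forall h, concave_on D h -> (forall x, D x -> f x <= h x) ->
        forall x, D x -> g x <= h x].

Definition bil (R : realType) (n : nat) (s : pt R n) : R :=
  s.1 ord_max * s.2 ord_max.

(* Direction vectors: pi u = true encodes pi_{u+1} = 1, false encodes = 2
   (u : 'I_(2n) is the 0-based version of t in [2n]). *)
Definition dirs (n : nat) : {set {ffun 'I_(n + n) -> bool}} :=
  [set pi : {ffun 'I_(n + n) -> bool} | (\sum_(u < n + n | pi u) 1)%N == n].

Definition p1 (n : nat) (pi : {ffun 'I_(n + n) -> bool}) (t : nat) : nat :=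
  (\sum_(u < n + n | (u < t)%N && pi u) 1)%N.
Definition p2 (n : nat) (pi : {ffun 'I_(n + n) -> bool}) (t : nat) : nat :=
  (\sum_(u < n + n | (u < t)%N && ~~ pi u) 1)%N.

(* a particular element of Pi (1,...,1,2,...,2), used as seed of the max/min *)
Definition pi0 (n : nat) : {ffun 'I_(n + n) -> bool} := [ffun u : 'I_(n + n) => (u < n)%N].

(* term inside the max, for direction pi (paper's t = u+1) *)
Definition Fcheck (R : realType) (n : nat) (a1 a2 : 'I_n.+1 -> R)
  (pi : {ffun 'I_(n + n) -> bool}) (s : pt R n) : R :=
  a1 (inord 0) * a2 (inord n)
  + \sum_(u < n + n | pi u)
      a2 (inord (n - p2 pi u.+1)%N)
        * (s.1 (inord (p1 pi u.+1)) - s.1 (inord (p1 pi u)))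
  + \sum_(u < n + n | ~~ pi u)
      a1 (inord (p1 pi u.+1))
        * (a2 (inord (n - p2 pi u.+1)%N) - a2 (inord (n - p2 pi u)%N)
           - s.2 (inord (n - p2 pi u.+1)%N) + s.2 (inord (n - p2 pi u)%N)).

Definition Fhat (R : realType) (n : nat) (a1 a2 : 'I_n.+1 -> R)
  (pi : {ffun 'I_(n + n) -> bool}) (s : pt R n) : R :=
  a1 (inord 0) * a2 (inord 0)
  + \sum_(u < n + n | pi u)
      a2 (inord (p2 pi u.+1))
        * (s.1 (inord (p1 pi u.+1)) - s.1 (inord (p1 pi u)))
  + \sum_(u < n + n | ~~ pi u)
      a1 (inord (p1 pi u.+1))
        * (s.2 (inord (p2 pi u.+1)) - s.2 (inord (p2 pi u))).

Definition bcheck (R : realType) (n : nat) (a1 a2 : 'I_n.+1 -> R)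
  (s : pt R n) : R :=
  \big[Num.max/Fcheck a1 a2 (pi0 n) s]_(pi in dirs n) Fcheck a1 a2 pi s.
Definition bhat (R : realType) (n : nat) (a1 a2 : 'I_n.+1 -> R)
  (s : pt R n) : R :=
  \big[Num.min/Fhat a1 a2 (pi0 n) s]_(pi in dirs n) Fhat a1 a2 pi s.

(* The functions [Fhat pi] and [Fcheck pi] are affine, so their minimum [bhat]
   is concave and their maximum [bcheck] convex.  A point s of Q is the convex
   combination of the vertex pairs (v_{1j}, v_{2k}) with weights rho (j, k), for
   any coupling rho of the two weight vectors of s.  At a vertex pair, [Fhat pi]
   telescopes to a_{1j} a_{2k} plus a sum of nonnegative products that vanishes
   when (j, k) lies on the staircase (p^t_1, p^t_2) of pi; [Fcheck pi] is
   a_{1j} a_{2k} minus such a sum, vanishing when (j, n - k) lies on it.  The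
   product coupling gives [Fcheck pi] <= bil <= [Fhat pi] on Q.  Conversely the
   north-west corner rule couples the weight vectors along a staircase, so that
   for a concave majorant h, Jensen's inequality yields
   h s >= sum rho (j, k) a_{1j} a_{2k} = [Fhat pi] s >= [bhat] s; dually for
   convex minorants and [bcheck]. *)

From HB Require Import structures.
From mathcomp Require Import all_boot all_order all_algebra.
From mathcomp Require Import reals.
From mathcomp Require Import ring lra zify.
Import Order.TTheory GRing.Theory Num.Theory.
Local Open Scope ring_scope.
Set Implicit Arguments. Unset Strict Implicit. Unset Printing Implicit Defensive.

Section PrefixCount.
Variables (N : nat) (P : pred 'I_N).

Definition prefix_count (t : nat) : nat := (\sum_(u < N | (u < t)%N && P u) 1)%N.

Lemma prefix_count0 : prefix_count 0 = 0%N.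
Proof. by rewrite /prefix_count big_pred0. Qed.

Lemma prefix_countS (u : 'I_N) : prefix_count u.+1 = (prefix_count u + P u)%N.
Proof.
rewrite /prefix_count; case Pu: (P u); last first.
  rewrite addn0; apply: eq_bigl => v; rewrite ltnS leq_eqVlt.
  by case: eqP => //= /val_inj ->; rewrite Pu andbF.
rewrite (bigD1 u) /=; last by rewrite ltnSn Pu.
rewrite addnC; congr (_ + _)%N; apply: eq_bigl => v.
by rewrite ltnS ltn_neqAle -val_eqE /= andbC andbA.
Qed.

Lemma prefix_count_homo : {homo prefix_count : t t' / (t <= t')%N}.
Proof.
move=> t t' le_tt'; rewrite /prefix_count !(big_mkcond (fun _ => _ && _)) /=.
by apply: leq_sum => v _; case: ifP => //= /andP [lt_vt ->]; rewrite (leq_trans lt_vt).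
Qed.

Lemma prefix_count_total : prefix_count N = (\sum_(u < N | P u) 1)%N.
Proof. by apply: eq_bigl => v; rewrite ltn_ord. Qed.

Lemma prefix_count_le_total t : (prefix_count t <= \sum_(u < N | P u) 1)%N.
Proof.
rewrite /prefix_count (big_mkcond (fun _ => _ && _)) [X in (_ <= X)%N]big_mkcond /=.
by apply: leq_sum => v _; case: ifP => //= /andP [_ ->].
Qed.

End PrefixCount.

Section Staircase.
Variable n : nat.
Implicit Types pi : {ffun 'I_(n + n) -> bool}.

Lemma dirs_count_negb pi : pi \in dirs n -> (\sum_(u < n + n | ~~ pi u) 1)%N = n.
Proof.
rewrite inE => /eqP count_pi.
have : (\sum_(u < n + n) 1 = n + n)%N.
  by rewrite -[RHS]card_ord -sum1_card; apply: eq_bigl => v; rewrite inE.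
by rewrite (bigID pi) /= count_pi => /eqP; rewrite eqn_add2l => /eqP.
Qed.

Lemma p1_0 pi : p1 pi 0 = 0%N. Proof. exact: prefix_count0. Qed.
Lemma p2_0 pi : p2 pi 0 = 0%N. Proof. exact: prefix_count0. Qed.

Lemma p1S pi (u : 'I_(n + n)) : p1 pi u.+1 = (p1 pi u + pi u)%N.
Proof. exact: prefix_countS. Qed.
Lemma p2S pi (u : 'I_(n + n)) : p2 pi u.+1 = (p2 pi u + ~~ pi u)%N.
Proof. exact: (prefix_countS (fun u => ~~ pi u)). Qed.

Lemma p1_homo pi : {homo p1 pi : t t' / (t <= t')%N}.
Proof. exact: prefix_count_homo. Qed.
Lemma p2_homo pi : {homo p2 pi : t t' / (t <= t')%N}.
Proof. exact: (prefix_count_homo (fun u => ~~ pi u)). Qed.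

Lemma p1_le pi t : pi \in dirs n -> (p1 pi t <= n)%N.
Proof.
rewrite inE => /eqP count_pi; rewrite -[X in (_ <= X)%N]count_pi.
exact: prefix_count_le_total.
Qed.
Lemma p2_le pi t : pi \in dirs n -> (p2 pi t <= n)%N.
Proof.
move/dirs_count_negb => count_pi; rewrite -[X in (_ <= X)%N]count_pi.
exact: (prefix_count_le_total (fun u => ~~ pi u)).
Qed.

Lemma p1_end pi : pi \in dirs n -> p1 pi (n + n) = n.
Proof. by rewrite inE => /eqP count_pi; rewrite -[RHS]count_pi; apply: prefix_count_total. Qed.
Lemma p2_end pi : pi \in dirs n -> p2 pi (n + n) = n.
Proof.
move/dirs_count_negb => count_pi; rewrite -[RHS]count_pi.
exact: (prefix_count_total (fun u => ~~ pi u)).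
Qed.

Definition dirs_of_seq (s : seq bool) : {ffun 'I_(n + n) -> bool} :=
  [ffun u : 'I_(n + n) => nth false s u].

Lemma prefix_count_dirs_of_seq (b : bool) s t : size s = (n + n)%N -> (t <= n + n)%N ->
  prefix_count (fun u => dirs_of_seq s u == b) t = count (pred1 b) (take t s).
Proof.
move=> size_s; elim: t => [|t IHt] le_t; first by rewrite prefix_count0 take0.
rewrite (prefix_countS _ (Ordinal le_t)) IHt ?(ltnW le_t) //.
rewrite (take_nth false) ?size_s // -cats1 count_cat /dirs_of_seq ffunE /=.
by rewrite addn0.
Qed.

Lemma p1_dirs_of_seq s t : size s = (n + n)%N -> (t <= n + n)%N ->
  p1 (dirs_of_seq s) t = count id (take t s).
Proof.
move=> size_s le_t; rewrite -(eq_count (a1 := pred1 true)); last by case.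
by rewrite -prefix_count_dirs_of_seq //; apply: eq_bigl => u; rewrite eqb_id.
Qed.

Lemma p2_dirs_of_seq s t : size s = (n + n)%N -> (t <= n + n)%N ->
  p2 (dirs_of_seq s) t = count negb (take t s).
Proof.
move=> size_s le_t; rewrite -(eq_count (a1 := pred1 false)); last by case.
by rewrite -prefix_count_dirs_of_seq //; apply: eq_bigl => u; rewrite eqbF_neg.
Qed.

Lemma dirs_of_seq_dirs s : size s = (n + n)%N -> count id s = n -> dirs_of_seq s \in dirs n.
Proof.
move=> size_s count_s; rewrite inE.
have <- : p1 (dirs_of_seq s) (n + n) = (\sum_(u < n + n | dirs_of_seq s u) 1)%N.
  exact: prefix_count_total.
by rewrite p1_dirs_of_seq // -size_s take_size count_s.
Qed.

Lemma pi0_dirs : pi0 n \in dirs n.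
Proof.
rewrite inE (eq_bigl (fun u : 'I_(n + n) => (u < n)%N)); last by move=> u; rewrite ffunE.
rewrite -(big_ord_widen _ (fun _ => 1%N)) ?leq_addr //.
by rewrite -[X in _ == X]card_ord -sum1_card; apply/eqP/eq_bigl => v; rewrite inE.
Qed.

End Staircase.

Lemma nondecreasing_inord (R : realType) (n : nat) (a : 'I_n.+1 -> R) :
  (forall i j : 'I_n.+1, (i <= j)%N -> a i <= a j) ->
  forall m m', (m <= m')%N -> (m' <= n)%N -> a (inord m) <= a (inord m').
Proof. by move=> a_homo m m' le_mm' le_m'n; apply: a_homo; rewrite !inordK //; lia. Qed.

Lemma vtx_inord (R : realType) (n : nat) (a : 'I_n.+1 -> R) j m : (m <= n)%N ->
  vtx a j (inord m) = a (inord (minn m j)).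
Proof.
move=> le_mn; rewrite /vtx inordK ?ltnS //.
by case: leqP => [le_mj | /ltnW le_jm]; rewrite ?inord_val ?(minn_idPl le_mj) ?(minn_idPr le_jm).
Qed.

Lemma inord_maxn_minn (R : realType) (n : nat) (a : 'I_n.+1 -> R) m (k : 'I_n.+1) :
  a (inord m) = a (inord (maxn m k)) + a (inord (minn m k)) - a k.
Proof. by case: leqP => _; rewrite inord_val; ring. Qed.

Lemma vtx_max (R : realType) (n : nat) (a : 'I_n.+1 -> R) j : vtx a j ord_max = a j.
Proof.
rewrite /vtx; case: leqP => // le_nj; congr a; apply/val_inj/eqP.
by rewrite eqn_leq le_nj -ltnS ltn_ord.
Qed.

Lemma sum_if (R : realType) (m : nat) (P : pred 'I_m) (F G : 'I_m -> R) :
  \sum_(u | P u) F u + \sum_(u | ~~ P u) G u = \sum_u (if P u then F u else G u).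
Proof.
rewrite [RHS](bigID P) /=.
by congr (_ + _); apply: eq_bigr => u Pu; rewrite ?Pu ?(negbTE Pu).
Qed.

Section VertexValues.
Variables (R : realType) (n : nat) (a1 a2 : 'I_n.+1 -> R).
Hypothesis a1_homo : forall i j : 'I_n.+1, (i <= j)%N -> a1 i <= a1 j.
Hypothesis a2_homo : forall i j : 'I_n.+1, (i <= j)%N -> a2 i <= a2 j.
Implicit Types (pi : {ffun 'I_(n + n) -> bool}) (j k : 'I_n.+1).

Local Notation A1 m := (a1 (inord m)).
Local Notation A2 m := (a2 (inord m)).

(* The u-th term of [Fhat] at the vertex pair (v_{1j}, v_{2k}) exceeds the
   increment of the potential A1 (min (p1 t) j) * A2 (min (p2 t) k) by this gap. *)
Definition Fhat_gap pi j k (u : 'I_(n + n)) : R :=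
  if pi u then (A1 (minn (p1 pi u.+1) j) - A1 (minn (p1 pi u) j)) *
               (A2 (p2 pi u.+1) - A2 (minn (p2 pi u.+1) k))
  else (A1 (p1 pi u.+1) - A1 (minn (p1 pi u.+1) j)) *
       (A2 (minn (p2 pi u.+1) k) - A2 (minn (p2 pi u) k)).

Lemma Fhat_vtx pi j k : pi \in dirs n ->
  Fhat a1 a2 pi (vtx a1 j, vtx a2 k) = a1 j * a2 k + \sum_u Fhat_gap pi j k u.
Proof.
move=> pi_dirs; rewrite /Fhat /= -addrA sum_if.
pose Phi t := A1 (minn (p1 pi t) j) * A2 (minn (p2 pi t) k).
rewrite (eq_bigr (fun u : 'I_(n + n) => Phi u.+1 - Phi u + Fhat_gap pi j k u)); last first.
  move=> u _; rewrite !vtx_inord ?p1_le ?p2_le // /Phi /Fhat_gap p1S p2S.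
  by case: (pi u); rewrite /= ?addn0 ?addn1; move: (p1 pi u) (p2 pi u) => i q; ring.
rewrite big_split /= -(big_mkord xpredT (fun u => Phi u.+1 - Phi u)) telescope_sumr //.
rewrite /Phi p1_0 p2_0 p1_end // p2_end // !min0n.
by rewrite (minn_idPr (leq_ord j)) (minn_idPr (leq_ord k)) !inord_val; ring.
Qed.

Lemma Fhat_gap_ge0 pi j k u : pi \in dirs n -> 0 <= Fhat_gap pi j k u.
Proof.
move=> pi_dirs; rewrite /Fhat_gap.
have := p1_le u.+1 pi_dirs; have := p2_le u.+1 pi_dirs.
have := p1_homo pi (leqnSn u); have := p2_homo pi (leqnSn u).
by case: (pi u) => *; apply: mulr_ge0; rewrite subr_ge0 nondecreasing_inord //; lia.
Qed.

Lemma Fhat_gap_on_path pi j k T u : j = p1 pi T :> nat -> k = p2 pi T :> nat ->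
  Fhat_gap pi j k u = 0.
Proof.
move=> j_T k_T; rewrite /Fhat_gap.
have := p1_homo pi (leqnSn u); have := p2_homo pi (leqnSn u).
case: (ltnP u T) => [lt_uT | le_Tu].
  have := p1_homo pi lt_uT; have := p2_homo pi lt_uT.
  case: (pi u) => *.
    by rewrite (minn_idPl (_ : p2 pi u.+1 <= k)%N) ?subrr ?mulr0 //; lia.
  by rewrite (minn_idPl (_ : p1 pi u.+1 <= j)%N) ?subrr ?mul0r //; lia.
have := p1_homo pi le_Tu; have := p2_homo pi le_Tu.
case: (pi u) => *.
  by rewrite !(minn_idPr (_ : j <= _)%N) ?subrr ?mul0r //; lia.
by rewrite !(minn_idPr (_ : k <= _)%N) ?subrr ?mulr0 //; lia.
Qed.

Lemma Fhat_vtx_ge pi j k : pi \in dirs n -> a1 j * a2 k <= Fhat a1 a2 pi (vtx a1 j, vtx a2 k).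
Proof.
by move=> pi_dirs; rewrite Fhat_vtx // lerDl sumr_ge0 // => u _; apply: Fhat_gap_ge0.
Qed.

Lemma Fhat_vtx_on_path pi j k T : pi \in dirs n ->
  j = p1 pi T :> nat -> k = p2 pi T :> nat ->
  Fhat a1 a2 pi (vtx a1 j, vtx a2 k) = a1 j * a2 k.
Proof.
move=> pi_dirs j_T k_T; rewrite Fhat_vtx // big1 ?addr0 // => u _.
exact: Fhat_gap_on_path j_T k_T.
Qed.

(* Same for [Fcheck], with the potential A1 (min (p1 t) j) * A2 (max (n - p2 t) k). *)
Definition Fcheck_gap pi j k (u : 'I_(n + n)) : R :=
  if pi u then (A1 (minn (p1 pi u.+1) j) - A1 (minn (p1 pi u) j)) *
               (A2 (maxn (n - p2 pi u.+1) k) - A2 (n - p2 pi u.+1))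
  else (A1 (p1 pi u.+1) - A1 (minn (p1 pi u.+1) j)) *
       (A2 (maxn (n - p2 pi u) k) - A2 (maxn (n - p2 pi u.+1) k)).

Lemma Fcheck_vtx pi j k : pi \in dirs n ->
  Fcheck a1 a2 pi (vtx a1 j, vtx a2 k) = a1 j * a2 k - \sum_u Fcheck_gap pi j k u.
Proof.
move=> pi_dirs; rewrite /Fcheck /= -addrA sum_if.
pose Psi t := A1 (minn (p1 pi t) j) * A2 (maxn (n - p2 pi t) k).
rewrite (eq_bigr (fun u : 'I_(n + n) => Psi u.+1 - Psi u - Fcheck_gap pi j k u)); last first.
  move=> u _; rewrite !vtx_inord ?p1_le ?leq_subr // /Psi /Fcheck_gap.
  rewrite (inord_maxn_minn a2 (n - p2 pi u.+1) k) (inord_maxn_minn a2 (n - p2 pi u) k) p1S p2S.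
  by case: (pi u); rewrite /= ?addn0 ?addn1; move: (p1 pi u) (p2 pi u) => i q; ring.
rewrite sumrB -(big_mkord xpredT (fun u => Psi u.+1 - Psi u)) telescope_sumr //.
rewrite /Psi p1_0 p2_0 p1_end // p2_end // subn0 subnn min0n max0n.
by rewrite (minn_idPr (leq_ord j)) (maxn_idPl (leq_ord k)) !inord_val; ring.
Qed.

Lemma Fcheck_gap_ge0 pi j k u : pi \in dirs n -> 0 <= Fcheck_gap pi j k u.
Proof.
move=> pi_dirs; rewrite /Fcheck_gap.
have := p1_le u.+1 pi_dirs; have := p2_le u.+1 pi_dirs; have := leq_ord k.
have := p1_homo pi (leqnSn u); have := p2_homo pi (leqnSn u).
by case: (pi u) => *; apply: mulr_ge0; rewrite subr_ge0 nondecreasing_inord //; lia.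
Qed.

Lemma Fcheck_gap_on_path pi j k T u : pi \in dirs n ->
  j = p1 pi T :> nat -> k = (n - p2 pi T)%N :> nat -> Fcheck_gap pi j k u = 0.
Proof.
move=> pi_dirs j_T k_T; rewrite /Fcheck_gap.
have := p1_homo pi (leqnSn u); have := p2_homo pi (leqnSn u).
have := p2_le u.+1 pi_dirs; have := p2_le T pi_dirs.
case: (ltnP u T) => [lt_uT | le_Tu].
  have := p1_homo pi lt_uT; have := p2_homo pi lt_uT.
  case: (pi u) => *.
    by rewrite (maxn_idPl (_ : k <= n - p2 pi u.+1)%N) ?subrr ?mulr0 //; lia.
  by rewrite (minn_idPl (_ : p1 pi u.+1 <= j)%N) ?subrr ?mul0r //; lia.
have := p1_homo pi le_Tu; have := p2_homo pi le_Tu.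
case: (pi u) => *.
  by rewrite !(minn_idPr (_ : j <= _)%N) ?subrr ?mul0r //; lia.
by rewrite !(maxn_idPr (_ : _ <= k)%N) ?subrr ?mulr0 //; lia.
Qed.

Lemma Fcheck_vtx_le pi j k : pi \in dirs n -> Fcheck a1 a2 pi (vtx a1 j, vtx a2 k) <= a1 j * a2 k.
Proof.
move=> pi_dirs; rewrite Fcheck_vtx // gerDl oppr_le0 sumr_ge0 // => u _.
exact: Fcheck_gap_ge0.
Qed.

Lemma Fcheck_vtx_on_path pi j k T : pi \in dirs n ->
  j = p1 pi T :> nat -> k = (n - p2 pi T)%N :> nat ->
  Fcheck a1 a2 pi (vtx a1 j, vtx a2 k) = a1 j * a2 k.
Proof.
move=> pi_dirs j_T k_T; rewrite Fcheck_vtx // big1 ?subr0 // => u _.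
exact: Fcheck_gap_on_path j_T k_T.
Qed.

End VertexValues.

Section AffineFunctions.
Variables (R : realType) (n : nat).
Implicit Types (F G : pt R n -> R).

Definition affine F := forall (I : finType) (w : I -> R) (P : I -> pt R n) (s : pt R n),
  \sum_i w i = 1 -> (forall m, s.1 m = \sum_i w i * (P i).1 m) ->
  (forall m, s.2 m = \sum_i w i * (P i).2 m) -> F s = \sum_i w i * F (P i).

Lemma affine_cst c : affine (fun _ => c).
Proof. by move=> I w P s sum_w _ _; rewrite -mulr_suml sum_w mul1r. Qed.

Lemma affine_fst m : affine (fun s => s.1 m).
Proof. by move=> I w P s _ s1 _; rewrite s1. Qed.

Lemma affine_snd m : affine (fun s => s.2 m).
Proof. by move=> I w P s _ _ s2; rewrite s2. Qed.

Lemma affineD F G : affine F -> affine G -> affine (fun s => F s + G s).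
Proof.
move=> aff_F aff_G I w P s sum_w s1 s2; rewrite (aff_F I w P) // (aff_G I w P) //.
by rewrite -big_split; apply: eq_bigr => i _; rewrite mulrDr.
Qed.

Lemma affineN F : affine F -> affine (fun s => - F s).
Proof.
move=> aff_F I w P s sum_w s1 s2; rewrite (aff_F I w P) // -sumrN.
by apply: eq_bigr => i _; rewrite mulrN.
Qed.

Lemma affineMl c F : affine F -> affine (fun s => c * F s).
Proof.
move=> aff_F I w P s sum_w s1 s2; rewrite (aff_F I w P) // mulr_sumr.
by apply: eq_bigr => i _; rewrite mulrCA.
Qed.

Lemma affine_sum (U : finType) (Q : pred U) (F : U -> pt R n -> R) :
  (forall u, affine (F u)) -> affine (fun s => \sum_(u | Q u) F u s).
Proof.
move=> aff_F I w P s sum_w s1 s2.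
rewrite (eq_bigr (fun u => \sum_i w i * F u (P i))) => [|u _]; last exact: aff_F.
by rewrite exchange_big; apply: eq_bigr => i _; rewrite mulr_sumr.
Qed.

Ltac affine_tac := repeat first
  [ apply: affine_cst | apply: affineD | apply: affineN | apply: affine_sum => ?
  | apply: affineMl | apply: affine_fst | apply: affine_snd ].

Lemma Fhat_affine (a1 a2 : 'I_n.+1 -> R) pi : affine (Fhat a1 a2 pi).
Proof. rewrite /Fhat; affine_tac. Qed.

Lemma Fcheck_affine (a1 a2 : 'I_n.+1 -> R) pi : affine (Fcheck a1 a2 pi).
Proof. rewrite /Fcheck; affine_tac. Qed.

Lemma affine_comb F x y t : affine F -> F (comb t x y) = t * F x + (1 - t) * F y.
Proof.
move=> aff_F; rewrite (aff_F bool (fun b => if b then t else 1 - t) (fun b => if b then x else y)).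
- by rewrite big_bool.
- by rewrite big_bool /=; ring.
- by move=> m; rewrite big_bool.
- by move=> m; rewrite big_bool.
Qed.

Definition comb_closed (D : pt R n -> Prop) :=
  forall x y t, D x -> D y -> 0 <= t <= 1 -> D (comb t x y).

Definition convex_comb (I : Type) (r : seq I) (w : I -> R) (P : I -> pt R n) : pt R n :=
  (fun m => \sum_(i <- r) w i * (P i).1 m, fun m => \sum_(i <- r) w i * (P i).2 m).

Lemma affine_convex_comb F (I : finType) (w : I -> R) (P : I -> pt R n) :
  affine F -> \sum_i w i = 1 -> F (convex_comb (index_enum I) w P) = \sum_i w i * F (P i).
Proof. by move=> aff_F sum_w; apply: aff_F. Qed.

Lemma concave_bigmin_affine (D : pt R n -> Prop) (I : finType) (A : {set I}) i0
    (F : I -> pt R n -> R) :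
  (forall i, affine (F i)) -> concave_on D (fun x => \big[Num.min/F i0 x]_(i in A) F i x).
Proof.
move=> aff_F x y t _ _ /andP [t_ge0 t_le1].
have le_F i : (i == i0) || (i \in A) ->
    t * \big[Num.min/F i0 x]_(i in A) F i x + (1 - t) * \big[Num.min/F i0 y]_(i in A) F i y
    <= F i (comb t x y).
  move=> i_A; rewrite affine_comb //.
  by apply: lerD; apply: ler_wpM2l; rewrite ?subr_ge0 //;
    case/orP: i_A => [/eqP -> | i_A]; rewrite ?bigmin_le_id ?bigmin_le_cond.
by apply: le_bigmin => [|i i_A]; apply: le_F; rewrite ?eqxx ?i_A ?orbT.
Qed.

Lemma convex_bigmax_affine (D : pt R n -> Prop) (I : finType) (A : {set I}) i0
    (F : I -> pt R n -> R) :
  (forall i, affine (F i)) -> convex_on D (fun x => \big[Num.max/F i0 x]_(i in A) F i x).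
Proof.
move=> aff_F x y t _ _ /andP [t_ge0 t_le1].
have F_le i : (i == i0) || (i \in A) -> F i (comb t x y) <=
    t * \big[Num.max/F i0 x]_(i in A) F i x + (1 - t) * \big[Num.max/F i0 y]_(i in A) F i y.
  move=> i_A; rewrite affine_comb //.
  by apply: lerD; apply: ler_wpM2l; rewrite ?subr_ge0 //;
    case/orP: i_A => [/eqP -> | i_A]; rewrite ?bigmax_ge_id ?le_bigmax_cond.
by apply: bigmax_le => [|i i_A]; apply: F_le; rewrite ?eqxx ?i_A ?orbT.
Qed.

Lemma sum_nonneg_weights_eq0 (I : Type) (r : seq I) (w X : I -> R) :
  (forall i, 0 <= w i) -> \sum_(i <- r) w i = 0 -> \sum_(i <- r) w i * X i = 0.
Proof.
move=> w_ge0; elim: r => [|i r IHr]; first by rewrite !big_nil.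
rewrite !big_cons => /eqP; rewrite paddr_eq0 ?sumr_ge0 // => /andP [/eqP -> /eqP sum0].
by rewrite IHr // mul0r add0r.
Qed.

Lemma mulr_sum_div (I : Type) (r : seq I) (w X : I -> R) S : S != 0 ->
  S * \sum_(i <- r) (w i / S) * X i = \sum_(i <- r) w i * X i.
Proof.
move=> S_neq0; rewrite mulr_sumr; apply: eq_bigr => i _.
by rewrite mulrA mulrCA divff ?mulr1.
Qed.

Lemma concave_jensen (D : pt R n -> Prop) (h : pt R n -> R) : comb_closed D -> concave_on D h ->
  forall (I : Type) (r : seq I) w P, (forall i, 0 <= w i) -> \sum_(i <- r) w i = 1 ->
  (forall i, D (P i)) ->
  D (convex_comb r w P) /\ \sum_(i <- r) w i * h (P i) <= h (convex_comb r w P).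
Proof.
move=> D_comb h_conc I; elim=> [|i r IHr] w P w_ge0 sum_w DP.
  by move: sum_w; rewrite big_nil => /eqP; rewrite eq_sym oner_eq0.
move: sum_w; rewrite big_cons; set S := \sum_(j <- r) w j => sum_w.
have S_ge0 : 0 <= S by apply: sumr_ge0.
have wiE : 1 - w i = S by rewrite -sum_w; ring.
have [S0 | S_neq0] := eqVneq S 0.
  have wi1 : w i = 1 by rewrite -sum_w S0 addr0.
  have -> : convex_comb (i :: r) w P = P i.
    rewrite [RHS]surjective_pairing; congr pair; apply: boolp.funext => m;
    by rewrite big_cons sum_nonneg_weights_eq0 // wi1 mul1r addr0.
  by rewrite big_cons sum_nonneg_weights_eq0 // wi1 mul1r addr0.
have sum_wS : \sum_(j <- r) w j / S = 1 by rewrite -mulr_suml divff.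
have [D_rest h_rest] := IHr _ P (fun j => divr_ge0 (w_ge0 j) S_ge0) sum_wS DP.
have -> : convex_comb (i :: r) w P = comb (w i) (P i) (convex_comb r (fun j => w j / S) P).
  rewrite /convex_comb /comb /=; congr pair; apply: boolp.funext => m;
  by rewrite big_cons wiE mulr_sum_div.
have wi01 : 0 <= w i <= 1 by rewrite w_ge0 -subr_ge0 wiE.
split; first exact: D_comb.
rewrite big_cons -[X in _ + X](mulr_sum_div _ _ _ S_neq0).
apply: le_trans (h_conc _ _ _ (DP i) D_rest wi01).
by rewrite wiE lerD2l ler_wpM2l.
Qed.

Lemma convex_jensen (D : pt R n -> Prop) (h : pt R n -> R) : comb_closed D -> convex_on D h ->
  forall (I : Type) (r : seq I) w P, (forall i, 0 <= w i) -> \sum_(i <- r) w i = 1 ->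
  (forall i, D (P i)) -> h (convex_comb r w P) <= \sum_(i <- r) w i * h (P i).
Proof.
move=> D_comb h_conv I r w P w_ge0 sum_w DP.
have Nh_conc : concave_on D (fun x => - h x).
  by move=> x y t Dx Dy t01; have := h_conv x y t Dx Dy t01; lra.
have [_] := concave_jensen D_comb Nh_conc w_ge0 sum_w DP.
by under eq_bigr do rewrite mulrN; rewrite sumrN lerN2.
Qed.

End AffineFunctions.

Section NorthWestCorner.
Variable R : realType.
Implicit Types (l k : nat -> R).

Definition balanced_marginals (a b : nat) l k :=
  [/\ forall i, 0 <= l i, forall j, 0 <= k j & \sum_(i < a.+1) l i = \sum_(j < b.+1) k j].

(* [s] is a monotone lattice path from (0, 0) to (a, b) (true = step in the first
   coordinate) and [rho] is a transport plan between [l] and [k] supported on it. *)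
Definition staircase_plan (a b : nat) l k :=
  exists (s : seq bool) (rho : nat -> nat -> R),
  [/\ count id s = a /\ count negb s = b, forall i j, 0 <= rho i j,
      forall i, (i <= a)%N -> \sum_(j < b.+1) rho i j = l i,
      forall j, (j <= b)%N -> \sum_(i < a.+1) rho i j = k j
    & forall i j, rho i j != 0 -> exists2 t, (t <= size s)%N &
        count id (take t s) = i /\ count negb (take t s) = j].

Lemma staircase_plan_sym a b l k : staircase_plan b a k l -> staircase_plan a b l k.
Proof.
move=> [s [rho [[count_s count_ns] rho_ge0 rho_l rho_k rho_supp]]].
have count_negb (s' : seq bool) : count id (map negb s') = count negb s'.
  by rewrite count_map; apply: eq_count.
have count_negbK (s' : seq bool) : count negb (map negb s') = count id s'.
  by rewrite count_map; apply: eq_count => x /=; rewrite negbK.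
exists (map negb s), (fun i j => rho j i); split => //.
- by rewrite count_negb count_negbK.
- move=> i j /rho_supp [t le_t [ct cnt]]; exists t; first by rewrite size_map.
  by rewrite -map_take count_negb count_negbK.
Qed.

Lemma term_le_sum l a : (forall i, 0 <= l i) -> l a <= \sum_(i < a.+1) l i.
Proof. by move=> l_ge0; rewrite big_ord_recr /= lerDr sumr_ge0. Qed.

(* North-west corner step: when l (a+1) <= k b, the last cell (a+1, b) receives
   the whole mass l (a+1) and the rest is a plan for (a, b) with k b lowered. *)
Lemma staircase_plan_step a b l k :
  (forall l k, balanced_marginals a b l k -> staircase_plan a b l k) ->
  balanced_marginals a.+1 b l k -> l a.+1 <= k b -> staircase_plan a.+1 b l k.
Proof.
move=> IHa [l_ge0 k_ge0 sum_lk] le_lk.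
pose k' j := if j == b then k b - l a.+1 else k j.
have k'_ge0 j : 0 <= k' j by rewrite /k'; case: eqP; rewrite ?subr_ge0.
have sum_lk' : \sum_(i < a.+1) l i = \sum_(j < b.+1) k' j.
  have sum_k' : \sum_(j < b.+1) k' j = \sum_(j < b) k j + (k b - l a.+1).
    rewrite big_ord_recr /= /k' eqxx; congr (_ + _); apply: eq_bigr => j _.
    by rewrite (ltn_eqF (ltn_ord j)).
  by move: sum_lk; rewrite sum_k' !big_ord_recr /=; lra.
have [s [rho [[count_s count_ns] rho_ge0 rho_l rho_k rho_supp]]] :=
  IHa l k' (And3 l_ge0 k'_ge0 sum_lk').
have rho_out i j : (a < i)%N -> rho i j = 0.
  move=> lt_ai; apply/eqP; apply: contraT => /rho_supp [t _ [count_t _]].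
  by have := leq_count_subseq id (take_subseq s t); rewrite count_t count_s leqNgt lt_ai.
exists (rcons s true), (fun i j => if (i == a.+1) && (j == b) then l a.+1 else rho i j).
split.
- by rewrite -cats1 !count_cat count_s count_ns addn1 addn0.
- by move=> i j; case: ifP.
- move=> i le_i; have [-> | ne_i] := eqVneq i a.+1.
    rewrite big_ord_recr /= eqxx big1 ?add0r // => j _.
    by rewrite (ltn_eqF (ltn_ord j)) rho_out.
  rewrite -(rho_l i); last by move: le_i; rewrite leq_eqVlt (negbTE ne_i).
  exact: eq_bigr.
- move=> j le_j; rewrite big_ord_recr /= eqxx /=.
  under eq_bigr => i _ do rewrite (ltn_eqF (ltn_ord i)) /=.
  rewrite rho_k // /k'; have [-> | ne_j] := eqVneq j b; first by ring.
  by rewrite rho_out // addr0.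
- move=> i j; case: ifP => [/andP [/eqP -> /eqP ->] _ | _ /rho_supp [t le_t count_t]].
    exists (size (rcons s true)) => //.
    by rewrite take_size -cats1 !count_cat count_s count_ns addn1 addn0.
  by exists t; rewrite ?size_rcons 1?ltnW // -cats1 takel_cat.
Qed.

Lemma north_west_corner a b l k : balanced_marginals a b l k -> staircase_plan a b l k.
Proof.
move: {2}(a + b)%N (erefl (a + b)%N) => N; elim: N a b l k => [|N IHN] a b l k sum_ab.
  have [-> ->] : a = 0%N /\ b = 0%N by lia.
  move=> [l_ge0 _]; rewrite !big_ord1 => l0_k0.
  exists [::], (fun i j => if (i == 0%N) && (j == 0%N) then l 0%N else 0); split => //.
  - by move=> i j; case: ifP.
  - by move=> i; rewrite leqn0 => /eqP ->; rewrite big_ord1.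
  - by move=> j; rewrite leqn0 => /eqP ->; rewrite big_ord1.
  - move=> i j; case: ifP => [/andP [/eqP -> /eqP ->] _ | _]; last by rewrite eqxx.
    by exists 0%N.
move=> bal; have [l_ge0 k_ge0 sum_lk] := bal.
have last_step_first a' : a = a'.+1 -> l a <= k b -> staircase_plan a b l k.
  move=> a_eq; rewrite a_eq => le_lk; rewrite a_eq in bal.
  by apply: staircase_plan_step bal le_lk => l' k'; apply: IHN; lia.
have last_step_second b' : b = b'.+1 -> k b <= l a -> staircase_plan a b l k.
  move=> b_eq; rewrite b_eq => le_kl; apply: staircase_plan_sym.
  apply: staircase_plan_step le_kl.
  - move=> l' k' [l'_ge0 k'_ge0 sum_l'k']; apply/staircase_plan_sym/IHN; first lia.
    by split => //; rewrite sum_l'k'.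
  - by rewrite b_eq in sum_lk; split.
have [le_lk | lt_kl] := lerP (l a) (k b).
  have [a0 | a_gt0] := posnP a; last by apply: (last_step_first a.-1) le_lk; rewrite prednK.
  apply: (last_step_second b.-1); first by rewrite prednK //; lia.
  by move: sum_lk; rewrite a0 big_ord1 => ->; apply: term_le_sum.
have [b0 | b_gt0] := posnP b; last by apply: (last_step_second b.-1) (ltW lt_kl); rewrite prednK.
have := term_le_sum a l_ge0; rewrite sum_lk b0 big_ord1 => le_lk.
by have := lt_le_trans lt_kl le_lk; rewrite b0 ltxx.
Qed.

End NorthWestCorner.

Section Couplings.
Variables (R : realType) (n : nat).
Implicit Types (l q : 'I_n.+1 -> R).

Definition coupling l q (rho : 'I_n.+1 * 'I_n.+1 -> R) :=
  [/\ forall p, 0 <= rho p, forall j, \sum_k rho (j, k) = l j & forall k, \sum_j rho (j, k) = q k].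

Lemma staircase_coupling l q : (forall j, 0 <= l j) -> (forall k, 0 <= q k) ->
  \sum_j l j = \sum_k q k ->
  exists2 pi, pi \in dirs n & exists2 rho, coupling l q rho &
    forall p, rho p != 0 -> exists T, p.1 = p1 pi T :> nat /\ p.2 = p2 pi T :> nat.
Proof.
move=> l_ge0 q_ge0 sum_lq.
have bal : balanced_marginals n n (fun i => l (inord i)) (fun j => q (inord j)).
  split=> //; transitivity (\sum_j l j); first by apply: eq_bigr => i _; rewrite inord_val.
  by rewrite sum_lq; apply: eq_bigr => j _; rewrite inord_val.
have [s [rho [[count_s count_ns] rho_ge0 rho_l rho_q rho_supp]]] := north_west_corner bal.
have size_s : size s = (n + n)%N by rewrite -(count_predC id s) count_s -count_ns.
exists (dirs_of_seq n s); first exact: dirs_of_seq_dirs.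
exists (fun p : 'I_n.+1 * 'I_n.+1 => rho p.1 p.2); first split.
- by move=> p; apply: rho_ge0.
- by move=> j; rewrite rho_l ?inord_val ?leq_ord.
- by move=> k; rewrite rho_q ?inord_val ?leq_ord.
move=> p /rho_supp [T le_T [count_T count_nT]]; exists T.
by rewrite p1_dirs_of_seq ?p2_dirs_of_seq -?size_s.
Qed.

Lemma antistaircase_coupling l q : (forall j, 0 <= l j) -> (forall k, 0 <= q k) ->
  \sum_j l j = \sum_k q k ->
  exists2 pi, pi \in dirs n & exists2 rho, coupling l q rho &
    forall p, rho p != 0 -> exists T, p.1 = p1 pi T :> nat /\ p.2 = (n - p2 pi T)%N :> nat.
Proof.
move=> l_ge0 q_ge0 sum_lq.
have sum_lqrev : \sum_j l j = \sum_k q (rev_ord k).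
  by rewrite sum_lq (reindex_inj rev_ord_inj).
have [pi pi_dirs [rho [rho_ge0 rho_l rho_q] rho_supp]] :=
  staircase_coupling l_ge0 (fun k => q_ge0 (rev_ord k)) sum_lqrev.
exists pi => //; exists (fun p => rho (p.1, rev_ord p.2)); first split.
- by move=> p; apply: rho_ge0.
- move=> j; rewrite -rho_l (reindex_inj rev_ord_inj).
  by apply: eq_bigr => k _; rewrite rev_ordK.
- by move=> k /=; rewrite rho_q rev_ordK.
move=> [j k] /rho_supp [T [/= j_T k_T]]; exists T; split => //=.
by move: k_T; have := ltn_ord k; rewrite /= subSS; lia.
Qed.

End Couplings.

Section Envelopes.
Variables (R : realType) (n : nat) (a1 a2 : 'I_n.+1 -> R).
Hypothesis a1_homo : forall i j : 'I_n.+1, (i <= j)%N -> a1 i <= a1 j.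
Hypothesis a2_homo : forall i j : 'I_n.+1, (i <= j)%N -> a2 i <= a2 j.
Implicit Types (l q : 'I_n.+1 -> R) (s : pt R n).

Definition vertex (p : 'I_n.+1 * 'I_n.+1) : pt R n := (vtx a1 p.1, vtx a2 p.2).

Lemma bil_vertex p : bil (vertex p) = a1 p.1 * a2 p.2.
Proof. by rewrite /bil /= !vtx_max. Qed.

Lemma in_Qi_vtx (a : 'I_n.+1 -> R) j : in_Qi a (vtx a j).
Proof.
exists (fun i => (i == j)%:R); split => [i||k]; first by rewrite ler0n.
  by rewrite (bigD1 j) //= eqxx big1 ?addr0 // => i /negbTE ->.
rewrite (bigD1 j) //= eqxx mul1r big1 ?addr0 // => i /negbTE ->.
by rewrite mul0r.
Qed.

Lemma inQ_vertex p : inQ a1 a2 (vertex p).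
Proof. by split; apply: in_Qi_vtx. Qed.

Lemma in_Qi_comb (a : 'I_n.+1 -> R) x y t : in_Qi a x -> in_Qi a y -> 0 <= t <= 1 ->
  in_Qi a (fun k => t * x k + (1 - t) * y k).
Proof.
move=> [l [l_ge0 sum_l x_l]] [q [q_ge0 sum_q y_q]] /andP [t_ge0 t_le1].
exists (fun j => t * l j + (1 - t) * q j); split.
- by move=> j; rewrite addr_ge0 ?mulr_ge0 ?subr_ge0.
- by rewrite big_split /= -!mulr_sumr sum_l sum_q; ring.
- by move=> k; rewrite x_l y_q !mulr_sumr -big_split /=; apply: eq_bigr => j _; ring.
Qed.

Lemma inQ_comb_closed : comb_closed (inQ a1 a2).
Proof. by move=> x y t [x1 x2] [y1 y2] t01; split; apply: in_Qi_comb. Qed.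

Lemma coupling_comb s l q rho :
  (forall m, s.1 m = \sum_j l j * vtx a1 j m) -> (forall m, s.2 m = \sum_k q k * vtx a2 k m) ->
  coupling l q rho -> convex_comb (index_enum _) rho vertex = s.
Proof.
move=> s1 s2 [_ rho_l rho_q]; rewrite [RHS]surjective_pairing /convex_comb.
congr pair; apply: boolp.funext => m; rewrite ?s1 ?s2.
  transitivity (\sum_j \sum_k rho (j, k) * vtx a1 j m).
    by rewrite pair_bigA; apply: eq_bigr => -[j k].
  by apply: eq_bigr => j _; rewrite -rho_l mulr_suml.
transitivity (\sum_j \sum_k rho (j, k) * vtx a2 k m).
  by rewrite pair_bigA; apply: eq_bigr => -[j k].
by rewrite exchange_big; apply: eq_bigr => k _; rewrite -rho_q mulr_suml.
Qed.

Lemma product_coupling l q : (forall j, 0 <= l j) -> (forall k, 0 <= q k) ->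
  \sum_j l j = 1 -> \sum_k q k = 1 -> coupling l q (fun p => l p.1 * q p.2).
Proof.
move=> l_ge0 q_ge0 sum_l sum_q; split=> [p|j|k] /=; first exact: mulr_ge0.
  by rewrite -mulr_sumr sum_q mulr1.
by rewrite -mulr_suml sum_l mul1r.
Qed.

Lemma coupling_sum1 l q rho : \sum_j l j = 1 -> coupling l q rho -> \sum_p rho p = 1.
Proof.
move=> sum_l [_ rho_l _]; rewrite -sum_l -(eq_bigr _ (fun j _ => rho_l j)) pair_bigA.
by apply: eq_bigr => -[].
Qed.

Lemma bil_inQ s l q :
  (forall m, s.1 m = \sum_j l j * vtx a1 j m) -> (forall m, s.2 m = \sum_k q k * vtx a2 k m) ->
  bil s = \sum_p (l p.1 * q p.2) * bil (vertex p).
Proof.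
move=> s1 s2; rewrite {1}/bil s1 s2 big_distrlr pair_bigA /=.
by apply: eq_bigr => -[j k] _; rewrite bil_vertex !vtx_max /=; ring.
Qed.

Lemma Fhat_ge_bil pi s : pi \in dirs n -> inQ a1 a2 s -> bil s <= Fhat a1 a2 pi s.
Proof.
move=> pi_dirs [[l [l_ge0 sum_l s1]] [q [q_ge0 sum_q s2]]].
have rho_coup := product_coupling l_ge0 q_ge0 sum_l sum_q.
rewrite (bil_inQ s1 s2) -(coupling_comb s1 s2 rho_coup).
rewrite affine_convex_comb ?(coupling_sum1 sum_l rho_coup) //; last exact: Fhat_affine.
apply: ler_sum => p _; rewrite ler_wpM2l ?mulr_ge0 // bil_vertex.
exact: Fhat_vtx_ge.
Qed.

Lemma Fcheck_le_bil pi s : pi \in dirs n -> inQ a1 a2 s -> Fcheck a1 a2 pi s <= bil s.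
Proof.
move=> pi_dirs [[l [l_ge0 sum_l s1]] [q [q_ge0 sum_q s2]]].
have rho_coup := product_coupling l_ge0 q_ge0 sum_l sum_q.
rewrite (bil_inQ s1 s2) -(coupling_comb s1 s2 rho_coup).
rewrite affine_convex_comb ?(coupling_sum1 sum_l rho_coup) //; last exact: Fcheck_affine.
apply: ler_sum => p _; rewrite ler_wpM2l ?mulr_ge0 // bil_vertex.
exact: Fcheck_vtx_le.
Qed.

Lemma bhat_ge_bil s : inQ a1 a2 s -> bil s <= bhat a1 a2 s.
Proof.
move=> s_Q; apply: le_bigmin => [|pi pi_dirs]; apply: Fhat_ge_bil => //.
exact: pi0_dirs.
Qed.

Lemma bcheck_le_bil s : inQ a1 a2 s -> bcheck a1 a2 s <= bil s.
Proof.
move=> s_Q; apply: bigmax_le => [|pi pi_dirs]; apply: Fcheck_le_bil => //.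
exact: pi0_dirs.
Qed.

(* Couple the two weight vectors of [s] along a staircase [pi]: every vertex
   charged by the coupling lies on the path, where [Fhat pi] agrees with [bil]. *)
Lemma bhat_le_concave_majorant h s : concave_on (inQ a1 a2) h ->
  (forall y, inQ a1 a2 y -> bil y <= h y) -> inQ a1 a2 s -> bhat a1 a2 s <= h s.
Proof.
move=> h_conc bil_le_h [[l [l_ge0 sum_l s1]] [q [q_ge0 sum_q s2]]].
have [pi pi_dirs [rho rho_coup rho_path]] :=
  staircase_coupling l_ge0 q_ge0 (etrans sum_l (esym sum_q)).
have sum_rho := coupling_sum1 sum_l rho_coup.
have [rho_ge0 _ _] := rho_coup.
have [_ jensen] := concave_jensen inQ_comb_closed h_conc rho_ge0 sum_rho inQ_vertex.
rewrite -(coupling_comb s1 s2 rho_coup); apply: le_trans jensen.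
apply: le_trans (bigmin_le_cond _ _ pi_dirs) _.
rewrite affine_convex_comb //; last exact: Fhat_affine.
apply: ler_sum => p _; have [-> | rho_p] := eqVneq (rho p) 0; first by rewrite !mul0r.
have [T [j_T k_T]] := rho_path p rho_p.
rewrite ler_wpM2l // (Fhat_vtx_on_path a1 a2 pi_dirs j_T k_T) -bil_vertex.
exact/bil_le_h/inQ_vertex.
Qed.

Lemma bcheck_ge_convex_minorant h s : convex_on (inQ a1 a2) h ->
  (forall y, inQ a1 a2 y -> h y <= bil y) -> inQ a1 a2 s -> h s <= bcheck a1 a2 s.
Proof.
move=> h_conv h_le_bil [[l [l_ge0 sum_l s1]] [q [q_ge0 sum_q s2]]].
have [pi pi_dirs [rho rho_coup rho_path]] :=
  antistaircase_coupling l_ge0 q_ge0 (etrans sum_l (esym sum_q)).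
have sum_rho := coupling_sum1 sum_l rho_coup.
have [rho_ge0 _ _] := rho_coup.
have jensen := convex_jensen inQ_comb_closed h_conv rho_ge0 sum_rho inQ_vertex.
rewrite -(coupling_comb s1 s2 rho_coup); apply: le_trans jensen _.
apply: le_trans (le_bigmax_cond _ _ pi_dirs).
rewrite affine_convex_comb //; last exact: Fcheck_affine.
apply: ler_sum => p _; have [-> | rho_p] := eqVneq (rho p) 0; first by rewrite !mul0r.
have [T [j_T k_T]] := rho_path p rho_p.
rewrite ler_wpM2l // (Fcheck_vtx_on_path a1 a2 pi_dirs j_T k_T) -bil_vertex.
exact/h_le_bil/inQ_vertex.
Qed.

End Envelopes.

Lemma increasing_nondecreasing (R : realType) (n : nat) (a : 'I_n.+1 -> R) :
  (forall i j : 'I_n.+1, (i < j)%N -> a i < a j) ->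
  forall i j : 'I_n.+1, (i <= j)%N -> a i <= a j.
Proof.
move=> a_incr i j; rewrite leq_eqVlt => /orP [/eqP/val_inj -> // | /a_incr/ltW //].
Qed.

Unset Implicit Arguments.

Theorem corollary4p4 (R : realType) (n : nat) (a1 a2 : 'I_n.+1 -> R) :
  (0 < n)%N ->
  (forall i j : 'I_n.+1, (i < j)%N -> a1 i < a1 j) ->
  (forall i j : 'I_n.+1, (i < j)%N -> a2 i < a2 j) ->
  is_convex_envelope (inQ a1 a2) (@bil R n) (bcheck a1 a2) /\
  is_concave_envelope (inQ a1 a2) (@bil R n) (bhat a1 a2).
Proof.
move=> _ /increasing_nondecreasing a1_homo /increasing_nondecreasing a2_homo.
split; split.
- exact: convex_bigmax_affine (Fcheck_affine a1 a2).
- exact: bcheck_le_bil.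
- by move=> h h_conv h_le_bil s; apply: bcheck_ge_convex_minorant.
- exact: concave_bigmin_affine (Fhat_affine a1 a2).
- exact: bhat_ge_bil.
- by move=> h h_conc bil_le_h s; apply: bhat_le_concave_majorant.
Qed.
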